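(* For positive reals $a,b>0$ define the means \[ H=\frac{2ab}{a+b},\quad G=\sqrt{ab},\quad A=\frac{a+b}{2},\quad S=\sqrt{\frac{a^2+b^2}{2}}, \] \[ N_1=\Big(\frac{\sqrt a+\sqrt b}{2}\Big)^2,\quad N_2=\Big(\frac{\sqrt a+\sqrt b}{2}\Big)\sqrt{\frac{a+b}{2}},\quad N_3=\frac{a+\sqrt{ab}+b}{3}, \] \[ P_1=\frac{ab(a^2+b^2)}{a^3+b^3},\quad P_2=\frac{ab(a+b)}{a^2+b^2},\quad P_3=\frac{ab(\sqrt a+\sqrt b)}{a^{3/2}+b^{3/2}},\quad P_4=\frac{4ab}{(\sqrt a+\sqrt b)^2}, \] \[ P_5=\Big(\frac{a+b}{\sqrt a+\sqrt b}\Big)^2,\quad P_6=\frac{a^2+b^2}{a+b}, \] all evaluated at $(a,b)$, and for two such means $X,Y$ let $D_{XY}(a,b)=X(a,b)-Y(a,b)$. Then for all $a,b>0$ the following inequalities hold (all $D$'s evaluated at $(a,b)$). (1) $\tfrac18 D_{P_6P_1}\le \tfrac16 D_{P_6P_2}\le D_{SA}\le \tfrac13 D_{SH}\le \tfrac12 D_{AH}$; $\tfrac12 D_{AH}\le \tfrac49 D_{P_6N_2}\le \tfrac13 D_{P_6G}$; $\tfrac12 D_{AH}\le \tfrac37 D_{P_6N_3}$ and $\tfrac12 D_{AH}\le \tfrac25 D_{SP_4}$; each of $\tfrac37 D_{P_6N_3}$ and $\tfrac25 D_{SP_4}$ is $\le \tfrac25 D_{P_6N_1}$ and $\le \tfrac27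 D_{P_6P_4}$; $\tfrac25 D_{P_6N_1}\le \tfrac13 D_{P_6G}$ and $\tfrac27 D_{P_6P_4}\le\tfrac13 D_{P_6G}$; $\tfrac13 D_{P_6G}\le \tfrac25 D_{P_5H}\le 4D_{N_2N_1}$ and $\tfrac13 D_{P_6G}\le \tfrac23 D_{AP_4}\le 4D_{N_2N_1}$; $4D_{N_2N_1}\le \tfrac43 D_{N_2G}\le D_{AG}\le 4D_{AN_2}\le \tfrac23 D_{P_5G}\le D_{P_5N_1}\le \tfrac65 D_{P_5N_3}\le \tfrac43 D_{P_5N_2}\le 2D_{P_5A}$. (2) $D_{SA}\le \tfrac45 D_{SN_2}\le \tfrac23 D_{SN_1}$ and $D_{SA}\le \tfrac34 D_{SN_3}\le \tfrac23 D_{SN_1}$; $\tfrac23 D_{SN_1}\le \tfrac13 D_{P_6G}\le \tfrac25 D_{P_5H}$ and $\tfrac23 D_{SN_1}\le \tfrac12 D_{SG}\le \tfrac25 D_{P_5H}$. (3) each of $\tfrac18 D_{P_6P_1}$ and $\tfrac{2}{13}D_{P_5P_1}$ is $\le \tfrac16 D_{P_6P_2}$ and $\le \tfrac29 D_{P_5P_2}$; $\tfrac16 D_{P_6P_2}\le \tfrac27 D_{P_5P_3}$ and $\tfrac29 D_{P_5P_2}\le \tfrac27 D_{P_5P_3}$; $\tfrac27 D_{P_5P_3}\le \tfrac49 D_{P_6N_2}\le D_{P_6S}\le D_{AG}$.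
   Context: $H,G,A,S$ are the harmonic, geometric, arithmetic and root-mean-square means; $N_3$ is Heron's mean; $P_1,P_2,P_3,P_6$ are the Lehmer means $K_r(a,b)=\frac{a^r+b^r}{a^{r-1}+b^{r-1}}$ for $r=-2,-1,-1/2,2$; $P_4$ is the power mean of order $-1/2$; $N_1$ is the power mean of order $1/2$; $P_5$ is the Gini mean $E_{1/2,1}(a,b)=\big(\frac{a^{1/2}+b^{1/2}}{a+b}\big)^{-2}$. For means $X,Y$, $D_{XY}=X-Y$ (e.g. $D_{SA}=S-A$, $D_{P_6P_1}=P_6-P_1$). *)

From Stdlib Require Import Reals.
Open Scope R_scope.

Definition mH (a b : R) : R := 2 * a * b / (a + b).
Definition mG (a b : R) : R := sqrt (a * b).
Definition mA (a b : R) : R := (a + b) / 2.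
Definition mS (a b : R) : R := sqrt ((a ^ 2 + b ^ 2) / 2).
Definition mN1 (a b : R) : R := ((sqrt a + sqrt b) / 2) ^ 2.
Definition mN2 (a b : R) : R := ((sqrt a + sqrt b) / 2) * sqrt ((a + b) / 2).
Definition mN3 (a b : R) : R := (a + sqrt (a * b) + b) / 3.
Definition mP1 (a b : R) : R := a * b * (a ^ 2 + b ^ 2) / (a ^ 3 + b ^ 3).
Definition mP2 (a b : R) : R := a * b * (a + b) / (a ^ 2 + b ^ 2).
(* a^{3/2} = Rpower a (3/2) for a > 0 *)
Definition mP3 (a b : R) : R :=
  a * b * (sqrt a + sqrt b) / (Rpower a (3/2) + Rpower b (3/2)).
Definition mP4 (a b : R) : R := 4 * a * b / (sqrt a + sqrt b) ^ 2.
Definition mP5 (a b : R) : R := ((a + b) / (sqrt a + sqrt b)) ^ 2.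
Definition mP6 (a b : R) : R := (a ^ 2 + b ^ 2) / (a + b).

Definition D (X Y : R -> R -> R) (a b : R) : R := X a b - Y a b.

From Stdlib Require Import Reals Lra.
Open Scope R_scope.

(* Substituting a = x^2 and b = y^2 turns every mean into a rational function of
   x and y, except S and N2, which involve the square roots sqrt((x^4 + y^4)/2) and
   sqrt((x^2 + y^2)/2).  Each inequality is proved by writing the gap (right side
   minus left side) explicitly.  Either the gap is a rational function whose numerator
   is (x - y)^4 times a polynomial with nonnegative coefficients, or it has the form
   p + q sqrt u or p - q sqrt u: its sign then follows from the sign of q (resp. p)
   and of q^2 u - p^2 (resp. p^2 - q^2 u), which is again such a rational function.
   When both square roots occur, this is applied twice. *)

Lemma le_of_sub_eq (l r g : R) : r - l = g -> 0 <= g -> l <= r.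
Proof. intros; lra. Qed.

Lemma add_mul_sqrt_nonneg (p q u : R) :
  0 <= q -> p ^ 2 <= q ^ 2 * u -> 0 <= p + q * sqrt u.
Proof.
  intros hq hpq.
  destruct (Rle_or_lt 0 u) as [hu | hu].
  - pose proof (sqrt_pos u) as hs; pose proof (pow2_sqrt u hu) as hs2.
    assert (hqs : 0 <= q * sqrt u) by nra.
    nra.
  - rewrite (sqrt_neg_0 u) by lra. nra.
Qed.

Lemma sub_mul_sqrt_nonneg (p q u : R) :
  0 <= p -> q ^ 2 * u <= p ^ 2 -> 0 <= p - q * sqrt u.
Proof.
  intros hp hpq.
  destruct (Rle_or_lt 0 u) as [hu | hu].
  - pose proof (pow2_sqrt u hu) as hs2. nra.
  - rewrite (sqrt_neg_0 u) by lra. lra.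
Qed.

Lemma sqr_add_mul_sqrt (a b v : R) :
  0 <= v -> (a + b * sqrt v) ^ 2 = a ^ 2 + b ^ 2 * v + 2 * a * b * sqrt v.
Proof.
  intro hv. rewrite <- (pow2_sqrt v hv) at 2. ring.
Qed.

Lemma sqr_sub_mul_sqrt (a b v : R) :
  0 <= v -> (a - b * sqrt v) ^ 2 = a ^ 2 + b ^ 2 * v - 2 * a * b * sqrt v.
Proof.
  intro hv. rewrite <- (pow2_sqrt v hv) at 2. ring.
Qed.

Lemma sqrt_sq_mul (x y : R) : 0 <= x -> 0 <= y -> sqrt (x ^ 2 * y ^ 2) = x * y.
Proof.
  intros hx hy.
  rewrite sqrt_mult_alt, !sqrt_pow2 by (apply pow2_ge_0 || assumption); reflexivity.
Qed.

Lemma Rpower_sq_three_halves (z : R) : 0 < z -> Rpower (z ^ 2) (3 / 2) = z ^ 3.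
Proof.
  intro hz.
  rewrite <- (Rpower_pow 2 z hz), Rpower_mult, <- (Rpower_pow 3 z hz).
  f_equal; simpl; field.
Qed.

Ltac pos := repeat first
  [ apply pow_lt | apply Rmult_lt_0_compat | apply Rplus_lt_0_compat
  | apply Rinv_0_lt_compat | lra ].

Ltac nonneg := repeat first
  [ apply pow2_ge_0 | apply pow_le | apply sqrt_pos
  | apply Rplus_le_le_0_compat | apply Rmult_le_pos
  | apply Rlt_le, Rinv_0_lt_compat; pos | lra ].

Ltac field_pos := field; repeat split; apply Rgt_not_eq; pos.

Ltac gap_is g := apply (le_of_sub_eq _ _ g); [field_pos |].
Ltac gap g := gap_is g; nonneg.

Ltac unfold_means :=
  unfold D, mH, mG, mA, mS, mN1, mN2, mN3, mP1, mP2, mP3, mP4, mP5, mP6;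
  rewrite ?sqrt_sq_mul, ?sqrt_pow2, ?Rpower_sq_three_halves by lra.

Section MeansAtSquares.

Variables x y : R.
Hypotheses (hx : 0 < x) (hy : 0 < y).

(* S and sqrt A at (x^2, y^2), in the syntactic form the definitions unfold to. *)
Local Notation rS := (sqrt (((x ^ 2) ^ 2 + (y ^ 2) ^ 2) / 2)).
Local Notation rA := (sqrt ((x ^ 2 + y ^ 2) / 2)).

Lemma DP6P1_le_DP6P2 : 1/8 * D mP6 mP1 (x^2) (y^2) <= 1/6 * D mP6 mP2 (x^2) (y^2).
Proof.
  unfold_means.
  gap (((x - y)^2)^2*(x^10 + 4*x^9*y + 9*x^8*y^2 + 16*x^7*y^3 + 22*x^6*y^4 + 24*x^5*y^5
      + 22*x^4*y^6 + 16*x^3*y^7 + 9*x^2*y^8 + 4*x*y^9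
      + y^10) / (24*(x^2 + y^2)*(x^4 + y^4)*(x^6 + y^6))).
Qed.

Lemma DP6P2_le_DSA : 1/6 * D mP6 mP2 (x^2) (y^2) <= D mS mA (x^2) (y^2).
Proof.
  unfold_means.
  gap_is ((-(2/3)*x^8 - (5/6)*x^6*y^2 - x^4*y^4 - (5/6)*x^2*y^6
      - (2/3)*y^8) / ((x^2 + y^2)*(x^4 + y^4)) + 1 * rS).
  apply add_mul_sqrt_nonneg; [nonneg | gap (((x - y)^2)^2*(2*x^12 + 8*x^11*y + 16*x^10*y^2
      + 24*x^9*y^3 + 29*x^8*y^4 + 28*x^7*y^5 + 26*x^6*y^6 + 28*x^5*y^7 + 29*x^4*y^8
      + 24*x^3*y^9 + 16*x^2*y^10 + 8*x*y^11 + 2*y^12) / (36*(x^2 + y^2)^2*(x^4 + y^4)^2))].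
Qed.

Lemma DSA_le_DSH : D mS mA (x^2) (y^2) <= 1/3 * D mS mH (x^2) (y^2).
Proof.
  unfold_means.
  gap_is (((1/2)*x^4 + (1/3)*x^2*y^2 + (1/2)*y^4) / (x^2 + y^2) - 2/3 * rS).
  apply sub_mul_sqrt_nonneg; [nonneg | gap (((x - y)^2)^2*(x^4 + 4*x^3*y + 6*x^2*y^2 + 4*x*y^3
      + y^4) / (36*(x^2 + y^2)^2))].
Qed.

Lemma DSH_le_DAH : 1/3 * D mS mH (x^2) (y^2) <= 1/2 * D mA mH (x^2) (y^2).
Proof.
  unfold_means.
  gap_is (((1/4)*x^4 + (1/6)*x^2*y^2 + (1/4)*y^4) / (x^2 + y^2) - 1/3 * rS).
  apply sub_mul_sqrt_nonneg; [nonneg | gap (((x - y)^2)^2*(x^4 + 4*x^3*y + 6*x^2*y^2 + 4*x*y^3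
      + y^4) / (144*(x^2 + y^2)^2))].
Qed.

Lemma DAH_le_DP6N2 : 1/2 * D mA mH (x^2) (y^2) <= 4/9 * D mP6 mN2 (x^2) (y^2).
Proof.
  unfold_means.
  gap_is (((7/36)*x^4 + (1/2)*x^2*y^2 + (7/36)*y^4) / (x^2 + y^2) - ((2/9)*x + (2/9)*y) * rA).
  apply sub_mul_sqrt_nonneg; [nonneg | gap (((x - y)^2)^2*(17*x^4 + 4*x^3*y + 38*x^2*y^2
      + 4*x*y^3 + 17*y^4) / (1296*(x^2 + y^2)^2))].
Qed.

Lemma DP6N2_le_DP6G : 4/9 * D mP6 mN2 (x^2) (y^2) <= 1/3 * D mP6 mG (x^2) (y^2).
Proof.
  unfold_means.
  gap_is ((-(1/9)*x^4 - (1/3)*x^3*y - (1/3)*x*y^3 - (1/9)*y^4) / (x^2 + y^2)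
      + ((2/9)*x + (2/9)*y) * rA).
  apply add_mul_sqrt_nonneg; [nonneg | gap (((x - y)^2)^2*(x^4 + 2*x^3*y + x^2*y^2 + 2*x*y^3
      + y^4) / (81*(x^2 + y^2)^2))].
Qed.

Lemma DAH_le_DP6N3 : 1/2 * D mA mH (x^2) (y^2) <= 3/7 * D mP6 mN3 (x^2) (y^2).
Proof. unfold_means; gap (((x - y)^2)^2 / (28*(x^2 + y^2))). Qed.

Lemma DAH_le_DSP4 : 1/2 * D mA mH (x^2) (y^2) <= 2/5 * D mS mP4 (x^2) (y^2).
Proof.
  unfold_means.
  gap_is ((-(1/4)*x^6 - (1/2)*x^5*y - (27/20)*x^4*y^2 + x^3*y^3 - (27/20)*x^2*y^4 - (1/2)*x*y^5
      - (1/4)*y^6) / ((x + y)^2*(x^2 + y^2)) + 2/5 * rS).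
  apply add_mul_sqrt_nonneg; [nonneg | gap (((x - y)^2)^3*(7*x^6 + 70*x^5*y + 201*x^4*y^2
      + 340*x^3*y^3 + 201*x^2*y^4 + 70*x*y^5 + 7*y^6) / (400*(x + y)^4*(x^2 + y^2)^2))].
Qed.

Lemma DP6N3_le_DP6N1 : 3/7 * D mP6 mN3 (x^2) (y^2) <= 2/5 * D mP6 mN1 (x^2) (y^2).
Proof. unfold_means; gap (((x - y)^2)^2 / (70*(x^2 + y^2))). Qed.

Lemma DP6N3_le_DP6P4 : 3/7 * D mP6 mN3 (x^2) (y^2) <= 2/7 * D mP6 mP4 (x^2) (y^2).
Proof. unfold_means; gap (((x - y)^2)^2*(x*y) / (7*(x + y)^2*(x^2 + y^2))). Qed.

Lemma DSP4_le_DP6N1 : 2/5 * D mS mP4 (x^2) (y^2) <= 2/5 * D mP6 mN1 (x^2) (y^2).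
Proof.
  unfold_means.
  gap_is ((3*x^7 + 7*x^6*y + 17*x^5*y^2 + 5*x^4*y^3 + 5*x^3*y^4 + 17*x^2*y^5 + 7*x*y^6
      + 3*y^7) / (10*(x + y)^3*(x^2 + y^2)) - 2/5 * rS).
  apply sub_mul_sqrt_nonneg; [nonneg | gap (((x - y)^2)^2*(x^15 + 3*x^14*y + x^13*y^2
      + 27*x^12*y^3 + 281*x^11*y^4 + 1147*x^10*y^5 + 2689*x^9*y^6 + 4043*x^8*y^7 + 4043*x^7*y^8
      + 2689*x^6*y^9 + 1147*x^5*y^10 + 281*x^4*y^11 + 27*x^3*y^12 + x^2*y^13 + 3*x*y^14
      + y^15) / (100*(x + y)^11*(x^2 + y^2)^2))].
Qed.

Lemma DSP4_le_DP6P4 : 2/5 * D mS mP4 (x^2) (y^2) <= 2/7 * D mP6 mP4 (x^2) (y^2).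
Proof.
  unfold_means.
  gap_is (((2/7)*x^6 + (4/7)*x^5*y + (26/35)*x^4*y^2 + (26/35)*x^2*y^4 + (4/7)*x*y^5
      + (2/7)*y^6) / ((x + y)^2*(x^2 + y^2)) - 2/5 * rS).
  apply sub_mul_sqrt_nonneg; [nonneg | gap ((2*((x - y)^2)^2*(x^8 + 8*x^7*y + 94*x^6*y^2
      + 264*x^5*y^3 + 386*x^4*y^4 + 264*x^3*y^5 + 94*x^2*y^6 + 8*x*y^7
      + y^8)) / (1225*(x + y)^4*(x^2 + y^2)^2))].
Qed.

Lemma DP6N1_le_DP6G : 2/5 * D mP6 mN1 (x^2) (y^2) <= 1/3 * D mP6 mG (x^2) (y^2).
Proof. unfold_means; gap (((x - y)^2)^2 / (30*(x^2 + y^2))). Qed.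

Lemma DP6P4_le_DP6G : 2/7 * D mP6 mP4 (x^2) (y^2) <= 1/3 * D mP6 mG (x^2) (y^2).
Proof. unfold_means; gap (((x - y)^2)^2*(x^3 + y^3) / (21*(x + y)^3*(x^2 + y^2))). Qed.

Lemma DP6G_le_DP5H : 1/3 * D mP6 mG (x^2) (y^2) <= 2/5 * D mP5 mH (x^2) (y^2).
Proof. unfold_means; gap (((x - y)^2)^2*(x^3 + y^3) / (15*(x + y)^3*(x^2 + y^2))). Qed.

Lemma DP5H_le_DN2N1 : 2/5 * D mP5 mH (x^2) (y^2) <= 4 * D mN2 mN1 (x^2) (y^2).
Proof.
  unfold_means.
  gap_is ((-(7/5)*x^6 - 4*x^5*y - (37/5)*x^4*y^2 - (32/5)*x^3*y^3 - (37/5)*x^2*y^4 - 4*x*y^5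
      - (7/5)*y^6) / ((x + y)^2*(x^2 + y^2)) + (2*x + 2*y) * rA).
  apply add_mul_sqrt_nonneg; [nonneg | gap (((x - y)^2)^2*(x^8 + 24*x^7*y + 72*x^6*y^2
      + 120*x^5*y^3 + 126*x^4*y^4 + 120*x^3*y^5 + 72*x^2*y^6 + 24*x*y^7
      + y^8) / (25*(x + y)^4*(x^2 + y^2)^2))].
Qed.

Lemma DP6G_le_DAP4 : 1/3 * D mP6 mG (x^2) (y^2) <= 2/3 * D mA mP4 (x^2) (y^2).
Proof. unfold_means; gap (((x - y)^2)^2*(x*y) / (3*(x + y)^2*(x^2 + y^2))). Qed.

Lemma DAP4_le_DN2N1 : 2/3 * D mA mP4 (x^2) (y^2) <= 4 * D mN2 mN1 (x^2) (y^2).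
Proof.
  unfold_means.
  gap_is ((-(4/3)*x^4 - (14/3)*x^3*y - 4*x^2*y^2 - (14/3)*x*y^3 - (4/3)*y^4) / ((x + y)^2)
      + (2*x + 2*y) * rA).
  apply add_mul_sqrt_nonneg; [nonneg | gap ((2*((x - y)^2)^2*(x^4 + 2*x^3*y + 2*x*y^3
      + y^4)) / (9*(x + y)^4))].
Qed.

Lemma DN2N1_le_DN2G : 4 * D mN2 mN1 (x^2) (y^2) <= 4/3 * D mN2 mG (x^2) (y^2).
Proof.
  unfold_means.
  gap_is (x^2 + (2/3)*x*y + y^2 - ((4/3)*x + (4/3)*y) * rA).
  apply sub_mul_sqrt_nonneg; [nonneg | gap (((x - y)^2)^2 / 9)].
Qed.

Lemma DN2G_le_DAG : 4/3 * D mN2 mG (x^2) (y^2) <= D mA mG (x^2) (y^2).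
Proof.
  unfold_means.
  gap_is ((1/2)*x^2 + (1/3)*x*y + (1/2)*y^2 - ((2/3)*x + (2/3)*y) * rA).
  apply sub_mul_sqrt_nonneg; [nonneg | gap (((x - y)^2)^2 / 36)].
Qed.

Lemma DAG_le_DAN2 : D mA mG (x^2) (y^2) <= 4 * D mA mN2 (x^2) (y^2).
Proof.
  unfold_means.
  gap_is ((3/2)*x^2 + x*y + (3/2)*y^2 - (2*x + 2*y) * rA).
  apply sub_mul_sqrt_nonneg; [nonneg | gap (((x - y)^2)^2 / 4)].
Qed.

Lemma DAN2_le_DP5G : 4 * D mA mN2 (x^2) (y^2) <= 2/3 * D mP5 mG (x^2) (y^2).
Proof.
  unfold_means.
  gap_is ((-(4/3)*x^4 - (14/3)*x^3*y - 4*x^2*y^2 - (14/3)*x*y^3 - (4/3)*y^4) / ((x + y)^2)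
      + (2*x + 2*y) * rA).
  apply add_mul_sqrt_nonneg; [nonneg | gap ((2*((x - y)^2)^2*(x^4 + 2*x^3*y + 2*x*y^3
      + y^4)) / (9*(x + y)^4))].
Qed.

Lemma DP5G_le_DP5N1 : 2/3 * D mP5 mG (x^2) (y^2) <= D mP5 mN1 (x^2) (y^2).
Proof. unfold_means; gap (((x - y)^2)^2 / (12*(x + y)^2)). Qed.

Lemma DP5N1_le_DP5N3 : D mP5 mN1 (x^2) (y^2) <= 6/5 * D mP5 mN3 (x^2) (y^2).
Proof. unfold_means; gap (((x - y)^2)^2 / (20*(x + y)^2)). Qed.

Lemma DP5N3_le_DP5N2 : 6/5 * D mP5 mN3 (x^2) (y^2) <= 4/3 * D mP5 mN2 (x^2) (y^2).
Proof.
  unfold_means.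
  gap_is (((8/15)*x^4 + (6/5)*x^3*y + (28/15)*x^2*y^2 + (6/5)*x*y^3 + (8/15)*y^4) / ((x + y)^2)
      - ((2/3)*x + (2/3)*y) * rA).
  apply sub_mul_sqrt_nonneg; [nonneg | gap ((2*((x - y)^2)^2*(7*x^4 + 22*x^3*y + 32*x^2*y^2
      + 22*x*y^3 + 7*y^4)) / (225*(x + y)^4))].
Qed.

Lemma DP5N2_le_DP5A : 4/3 * D mP5 mN2 (x^2) (y^2) <= 2 * D mP5 mA (x^2) (y^2).
Proof.
  unfold_means.
  gap_is ((-(1/3)*x^4 - 2*x^3*y - (2/3)*x^2*y^2 - 2*x*y^3 - (1/3)*y^4) / ((x + y)^2)
      + ((2/3)*x + (2/3)*y) * rA).
  apply add_mul_sqrt_nonneg; [nonneg | gap (((x - y)^2)^2*(x^4 + 4*x^3*y + 2*x^2*y^2 + 4*x*y^3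
      + y^4) / (9*(x + y)^4))].
Qed.

Lemma DSA_le_DSN2 : D mS mA (x^2) (y^2) <= 4/5 * D mS mN2 (x^2) (y^2).
Proof.
  unfold_means.
  gap_is ((x^2 + y^2)/2 - (2/5*(x + y)) * rA - 1/5 * rS).
  apply sub_mul_sqrt_nonneg.
  - apply sub_mul_sqrt_nonneg; [nonneg | gap ((17*x^5 + x^4*y + 18*x^3*y^2 + 18*x^2*y^3 + x*y^4
      + 17*y^5) / (100*(x + y)))].
  - rewrite sqr_sub_mul_sqrt by nonneg.
    gap_is ((31*x^4 + 16*x^3*y + 66*x^2*y^2 + 16*x*y^3 + 31*y^4)/100 - (2/5*(x^3 + x^2*y
        + x*y^2 + y^3)) * rA).
    apply sub_mul_sqrt_nonneg; [nonneg | gap (((x - y)^2)^2*(161*x^4 + 36*x^3*y + 326*x^2*y^2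
        + 36*x*y^3 + 161*y^4) / 10000)].
Qed.

Lemma DSN2_le_DSN1 : 4/5 * D mS mN2 (x^2) (y^2) <= 2/3 * D mS mN1 (x^2) (y^2).
Proof.
  unfold_means.
  gap_is (-(x + y)^2/6 + (2/5*(x + y)) * rA - 2/15 * rS).
  apply sub_mul_sqrt_nonneg.
  - apply add_mul_sqrt_nonneg; [nonneg | gap ((47*x^5 + 91*x^4*y + 38*x^3*y^2 + 38*x^2*y^3
      + 91*x*y^4 + 47*y^5) / (900*(x + y)))].
  - rewrite sqr_add_mul_sqrt by nonneg.
    gap_is ((89*x^4 + 244*x^3*y + 294*x^2*y^2 + 244*x*y^3 + 89*y^4)/900 - (2/15*x^3 + 2/5*x^2*y
        + 2/5*x*y^2 + 2/15*y^3) * rA).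
    apply sub_mul_sqrt_nonneg; [nonneg | gap (((x - y)^2)^2*(721*x^4 + 3116*x^3*y
        + 4806*x^2*y^2 + 3116*x*y^3 + 721*y^4) / 810000)].
Qed.

Lemma DSA_le_DSN3 : D mS mA (x^2) (y^2) <= 3/4 * D mS mN3 (x^2) (y^2).
Proof.
  unfold_means.
  gap_is ((x^3 + y^3) / (4*(x + y)) - 1/4 * rS).
  apply sub_mul_sqrt_nonneg; [nonneg | gap (((x - y)^2)^2 / 32)].
Qed.

Lemma DSN3_le_DSN1 : 3/4 * D mS mN3 (x^2) (y^2) <= 2/3 * D mS mN1 (x^2) (y^2).
Proof.
  unfold_means.
  gap_is ((x^3 + y^3) / (12*(x + y)) - 1/12 * rS).
  apply sub_mul_sqrt_nonneg; [nonneg | gap (((x - y)^2)^2 / 288)].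
Qed.

Lemma DSN1_le_DP6G : 2/3 * D mS mN1 (x^2) (y^2) <= 1/3 * D mP6 mG (x^2) (y^2).
Proof.
  unfold_means.
  gap_is (((1/2)*x^4 + (1/3)*x^2*y^2 + (1/2)*y^4) / (x^2 + y^2) - 2/3 * rS).
  apply sub_mul_sqrt_nonneg; [nonneg | gap (((x - y)^2)^2*(x^4 + 4*x^3*y + 6*x^2*y^2 + 4*x*y^3
      + y^4) / (36*(x^2 + y^2)^2))].
Qed.

Lemma DSN1_le_DSG : 2/3 * D mS mN1 (x^2) (y^2) <= 1/2 * D mS mG (x^2) (y^2).
Proof.
  unfold_means.
  gap_is ((x^3 + y^3) / (6*(x + y)) - 1/6 * rS).
  apply sub_mul_sqrt_nonneg; [nonneg | gap (((x - y)^2)^2 / 72)].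
Qed.

Lemma DSG_le_DP5H : 1/2 * D mS mG (x^2) (y^2) <= 2/5 * D mP5 mH (x^2) (y^2).
Proof.
  unfold_means.
  gap_is ((4*x^7 + 9*x^6*y + 19*x^5*y^2 + 8*x^4*y^3 + 8*x^3*y^4 + 19*x^2*y^5 + 9*x*y^6
      + 4*y^7) / (10*(x + y)^3*(x^2 + y^2)) - 1/2 * rS).
  apply sub_mul_sqrt_nonneg; [nonneg | gap (((x - y)^2)^2*(7*x^8 + 8*x^7*y + 64*x^6*y^2
      + 120*x^5*y^3 + 242*x^4*y^4 + 120*x^3*y^5 + 64*x^2*y^6 + 8*x*y^7
      + 7*y^8) / (200*(x + y)^4*(x^2 + y^2)^2))].
Qed.

Lemma DP6P1_le_DP5P2 : 1/8 * D mP6 mP1 (x^2) (y^2) <= 2/9 * D mP5 mP2 (x^2) (y^2).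
Proof.
  unfold_means.
  gap (((x - y)^2)^2*(7*x^12 + 10*x^11*y + 30*x^10*y^2 + 74*x^9*y^3 + 165*x^8*y^4 + 244*x^7*y^5
      + 284*x^6*y^6 + 244*x^5*y^7 + 165*x^4*y^8 + 74*x^3*y^9 + 30*x^2*y^10 + 10*x*y^11
      + 7*y^12) / (72*(x + y)^2*(x^2 + y^2)*(x^4 + y^4)*(x^6 + y^6))).
Qed.

Lemma DP5P1_le_DP6P2 : 2/13 * D mP5 mP1 (x^2) (y^2) <= 1/6 * D mP6 mP2 (x^2) (y^2).
Proof.
  unfold_means.
  gap (((x - y)^2)^2*(x^12 + 30*x^11*y + 90*x^10*y^2 + 182*x^9*y^3 + 270*x^8*y^4 + 342*x^7*y^5
      + 362*x^6*y^6 + 342*x^5*y^7 + 270*x^4*y^8 + 182*x^3*y^9 + 90*x^2*y^10 + 30*x*y^11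
      + y^12) / (78*(x + y)^2*(x^2 + y^2)*(x^4 + y^4)*(x^6 + y^6))).
Qed.

Lemma DP5P1_le_DP5P2 : 2/13 * D mP5 mP1 (x^2) (y^2) <= 2/9 * D mP5 mP2 (x^2) (y^2).
Proof.
  unfold_means.
  gap ((2*((x - y)^2)^2*(4*x^10 + 16*x^9*y + 44*x^8*y^2 + 88*x^7*y^3 + 139*x^6*y^4
      + 162*x^5*y^5 + 139*x^4*y^6 + 88*x^3*y^7 + 44*x^2*y^8 + 16*x*y^9
      + 4*y^10)) / (117*(x + y)^2*(x^4 + y^4)*(x^6 + y^6))).
Qed.

Lemma DP6P2_le_DP5P3 : 1/6 * D mP6 mP2 (x^2) (y^2) <= 2/7 * D mP5 mP3 (x^2) (y^2).
Proof.
  unfold_means.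
  gap (((x - y)^2)^2*(5*x^9 + 6*x^8*y + 18*x^7*y^2 + 39*x^6*y^3 + 60*x^5*y^4 + 60*x^4*y^5
      + 39*x^3*y^6 + 18*x^2*y^7 + 6*x*y^8
      + 5*y^9) / (42*(x + y)^2*(x^2 + y^2)*(x^3 + y^3)*(x^4 + y^4))).
Qed.

Lemma DP5P2_le_DP5P3 : 2/9 * D mP5 mP2 (x^2) (y^2) <= 2/7 * D mP5 mP3 (x^2) (y^2).
Proof.
  unfold_means.
  gap ((2*((x - y)^2)^2*(2*x^7 + 8*x^6*y + 22*x^5*y^2 + 37*x^4*y^3 + 37*x^3*y^4 + 22*x^2*y^5
      + 8*x*y^6 + 2*y^7)) / (63*(x + y)^2*(x^3 + y^3)*(x^4 + y^4))).
Qed.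

Lemma DP5P3_le_DP6N2 : 2/7 * D mP5 mP3 (x^2) (y^2) <= 4/9 * D mP6 mN2 (x^2) (y^2).
Proof.
  unfold_means.
  gap_is ((2*(5*x^10 + 33*x^9*y + 24*x^8*y^2 + 28*x^7*y^3 + 83*x^6*y^4 + 102*x^5*y^5
      + 83*x^4*y^6 + 28*x^3*y^7 + 24*x^2*y^8 + 33*x*y^9
      + 5*y^10)) / (63*(x + y)^3*(x^2 + y^2)*(x^3 + y^3)) - ((2/9)*x + (2/9)*y) * rA).
  apply sub_mul_sqrt_nonneg; [nonneg | gap ((2*((x - y)^2)^2*(x^14 + 270*x^13*y + 1680*x^12*y^2
      + 3336*x^11*y^3 + 5304*x^10*y^4 + 7990*x^9*y^5 + 11103*x^8*y^6 + 12984*x^7*y^7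
      + 11103*x^6*y^8 + 7990*x^5*y^9 + 5304*x^4*y^10 + 3336*x^3*y^11 + 1680*x^2*y^12
      + 270*x*y^13 + y^14)) / (3969*(x + y)^4*(x^2 + y^2)^2*(x^3 + y^3)^2))].
Qed.

Lemma DP6N2_le_DP6S : 4/9 * D mP6 mN2 (x^2) (y^2) <= D mP6 mS (x^2) (y^2).
Proof.
  unfold_means.
  gap_is (5*(x^4 + y^4)/(9*(x^2 + y^2)) + (2/9*(x + y)) * rA - 1 * rS).
  apply sub_mul_sqrt_nonneg; [nonneg |].
  rewrite sqr_add_mul_sqrt by nonneg.
  gap_is ((-(1/6)*x^8 + (4/81)*x^7*y - (73/81)*x^6*y^2 + (4/27)*x^5*y^3 - (19/81)*x^4*y^4
      + (4/27)*x^3*y^5 - (73/81)*x^2*y^6 + (4/81)*x*y^7 - (1/6)*y^8) / (x^2 + y^2)^2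
          + (20*(x^5 + x^4*y + x*y^4 + y^5) / (81*(x^2 + y^2))) * rA).
  apply add_mul_sqrt_nonneg; [nonneg | gap (((x - y)^2)^2*(71*x^12 + 2316*x^11*y
      + 4090*x^10*y^2 + 11180*x^9*y^3 + 12021*x^8*y^4 + 11960*x^7*y^5 + 6004*x^6*y^6
      + 11960*x^5*y^7 + 12021*x^4*y^8 + 11180*x^3*y^9 + 4090*x^2*y^10 + 2316*x*y^11
      + 71*y^12) / (26244*(x^2 + y^2)^4))].
Qed.

Lemma DP6S_le_DAG : D mP6 mS (x^2) (y^2) <= D mA mG (x^2) (y^2).
Proof.
  unfold_means.
  gap_is ((-(1/2)*x^4 - x^3*y + x^2*y^2 - x*y^3 - (1/2)*y^4) / (x^2 + y^2) + 1 * rS).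
  apply add_mul_sqrt_nonneg; [nonneg | gap (((x - y)^2)^3*(x^2 + 2*x*y + y^2) / (4*(x^2 + y^2)^2))].
Qed.

End MeansAtSquares.

Create HintDb mean_gaps.
#[local] Hint Resolve
  DP6P1_le_DP6P2 DP6P2_le_DSA DSA_le_DSH DSH_le_DAH DAH_le_DP6N2
  DP6N2_le_DP6G DAH_le_DP6N3 DAH_le_DSP4 DP6N3_le_DP6N1 DP6N3_le_DP6P4
  DSP4_le_DP6N1 DSP4_le_DP6P4 DP6N1_le_DP6G DP6P4_le_DP6G DP6G_le_DP5H
  DP5H_le_DN2N1 DP6G_le_DAP4 DAP4_le_DN2N1 DN2N1_le_DN2G DN2G_le_DAG
  DAG_le_DAN2 DAN2_le_DP5G DP5G_le_DP5N1 DP5N1_le_DP5N3 DP5N3_le_DP5N2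
  DP5N2_le_DP5A DSA_le_DSN2 DSN2_le_DSN1 DSA_le_DSN3 DSN3_le_DSN1
  DSN1_le_DP6G DSN1_le_DSG DSG_le_DP5H DP6P1_le_DP5P2 DP5P1_le_DP6P2
  DP5P1_le_DP5P2 DP6P2_le_DP5P3 DP5P2_le_DP5P3 DP5P3_le_DP6N2
  DP6N2_le_DP6S DP6S_le_DAG
  : mean_gaps.

Theorem theorem3p1 (a b : R) (ha : 0 < a) (hb : 0 < b) :
  (* (1) *)
  ( 1/8 * D mP6 mP1 a b <= 1/6 * D mP6 mP2 a b /\
    1/6 * D mP6 mP2 a b <= D mS mA a b /\
    D mS mA a b <= 1/3 * D mS mH a b /\
    1/3 * D mS mH a b <= 1/2 * D mA mH a b /\
    1/2 * D mA mH a b <= 4/9 * D mP6 mN2 a b /\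
    4/9 * D mP6 mN2 a b <= 1/3 * D mP6 mG a b /\
    1/2 * D mA mH a b <= 3/7 * D mP6 mN3 a b /\
    1/2 * D mA mH a b <= 2/5 * D mS mP4 a b /\
    3/7 * D mP6 mN3 a b <= 2/5 * D mP6 mN1 a b /\
    3/7 * D mP6 mN3 a b <= 2/7 * D mP6 mP4 a b /\
    2/5 * D mS mP4 a b <= 2/5 * D mP6 mN1 a b /\
    2/5 * D mS mP4 a b <= 2/7 * D mP6 mP4 a b /\
    2/5 * D mP6 mN1 a b <= 1/3 * D mP6 mG a b /\
    2/7 * D mP6 mP4 a b <= 1/3 * D mP6 mG a b /\
    1/3 * D mP6 mG a b <= 2/5 * D mP5 mH a b /\
    2/5 * D mP5 mH a b <= 4 * D mN2 mN1 a b /\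
    1/3 * D mP6 mG a b <= 2/3 * D mA mP4 a b /\
    2/3 * D mA mP4 a b <= 4 * D mN2 mN1 a b /\
    4 * D mN2 mN1 a b <= 4/3 * D mN2 mG a b /\
    4/3 * D mN2 mG a b <= D mA mG a b /\
    D mA mG a b <= 4 * D mA mN2 a b /\
    4 * D mA mN2 a b <= 2/3 * D mP5 mG a b /\
    2/3 * D mP5 mG a b <= D mP5 mN1 a b /\
    D mP5 mN1 a b <= 6/5 * D mP5 mN3 a b /\
    6/5 * D mP5 mN3 a b <= 4/3 * D mP5 mN2 a b /\
    4/3 * D mP5 mN2 a b <= 2 * D mP5 mA a b ) /\
  (* (2) *)
  ( D mS mA a b <= 4/5 * D mS mN2 a b /\
    4/5 * D mS mN2 a b <= 2/3 * D mS mN1 a b /\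
    D mS mA a b <= 3/4 * D mS mN3 a b /\
    3/4 * D mS mN3 a b <= 2/3 * D mS mN1 a b /\
    2/3 * D mS mN1 a b <= 1/3 * D mP6 mG a b /\
    1/3 * D mP6 mG a b <= 2/5 * D mP5 mH a b /\
    2/3 * D mS mN1 a b <= 1/2 * D mS mG a b /\
    1/2 * D mS mG a b <= 2/5 * D mP5 mH a b ) /\
  (* (3) *)
  ( 1/8 * D mP6 mP1 a b <= 1/6 * D mP6 mP2 a b /\
    1/8 * D mP6 mP1 a b <= 2/9 * D mP5 mP2 a b /\
    2/13 * D mP5 mP1 a b <= 1/6 * D mP6 mP2 a b /\
    2/13 * D mP5 mP1 a b <= 2/9 * D mP5 mP2 a b /\
    1/6 * D mP6 mP2 a b <= 2/7 * D mP5 mP3 a b /\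
    2/9 * D mP5 mP2 a b <= 2/7 * D mP5 mP3 a b /\
    2/7 * D mP5 mP3 a b <= 4/9 * D mP6 mN2 a b /\
    4/9 * D mP6 mN2 a b <= D mP6 mS a b /\
    D mP6 mS a b <= D mA mG a b ).
Proof.
  assert (hx : 0 < sqrt a) by (apply sqrt_lt_R0; lra).
  assert (hy : 0 < sqrt b) by (apply sqrt_lt_R0; lra).
  rewrite <- (pow2_sqrt a), <- (pow2_sqrt b) by lra.
  repeat split; auto with mean_gaps.
Qed.
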